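(* Consider random parity games on $n=|\mathcal{V}|$ nodes drawn according to the random model (R) with out-degree $d=2$. Then for every node $v$, $$\mathbb{P}(v\text{ is self-winning})\to 0\quad\text{as } n\to\infty.$$
   Context: A parity game is a tuple $(\mathcal{G},a,p)$ with $\mathcal{G}=(\mathcal{V},\mathcal{E})$ a finite directed graph, owners $a:\mathcal{V}\to\{-1,+1\}$ and priorities $p:\mathcal{V}\to\mathbb{N}$. Let $\mathrm{par}(k)=+1$ if $k$ is odd and $-1$ if $k$ is even. For $i\in\{-1,+1\}$, $\mathcal{G}_i$ is the subgraph induced by nodes owned by $i$. A self-winning cycle is a directed cycle in some $\mathcal{G}_i$ whose maximal priority $m$ satisfies $\mathrm{par}(m)=i$; a node is self-winning if it lies on such a cycle. Random model (R) with out-degree $d$: $\mathcal{G}$ is drawn uniformly at random among directed graphs on $n$ labelled nodes in which every node has out-degree exactly $d$; the owners $a(v)$ are i.i.d. uniform on $\{-1,+1\}$; the priorities $p(v)$ are i.i.d. from a distribution on $\mathbb{N}$ with $\mathbb{P}(p(v)\text{ even})=\mathbb{P}(p(v)\text{ odd})=1/2$; all independent. *)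

From HB Require Import structures.
From mathcomp Require Import all_boot all_order all_algebra.
From mathcomp Require Import all_classical all_reals all_analysis.
Set Implicit Arguments. Unset Strict Implicit. Unset Printing Implicit Defensive.
Import Order.TTheory GRing.Theory Num.Theory.
Local Open Scope classical_set_scope.
Local Open Scope ring_scope.

(* A directed graph with out-degree exactly d is given by its
   out-neighbourhoods E : {ffun 'I_n -> {set 'I_n}} with #|E v| = d
   (no multi-edges; self-loops allowed).  Owners: true = +1 (odd player),
   false = -1 (even player). *)
Definition graph (n : nat) := {ffun 'I_n -> {set 'I_n}}.
Definition owners (n : nat) := {ffun 'I_n -> bool}.
Definition prios (n : nat) := {ffun 'I_n -> nat}.

Definition outdeg_eq (d n : nat) (E : graph n) : bool :=
  [forall v, #|E v| == d].

Definition ngraphs (d n : nat) : nat := #|[set E : graph n | outdeg_eq d E]|.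

Definition self_winning_cycle (n : nat) (E : graph n) (a : owners n)
    (p : prios n) (s : seq 'I_n) : bool :=
  [&& s != [::], uniq s, cycle (fun x y => y \in E x) s &
      [exists b : bool,
        all (fun x => a x == b) s && (odd (\max_(x <- s) p x) == b)]].

Definition self_winning (n : nat) (E : graph n) (a : owners n) (p : prios n)
    (v : 'I_n) : Prop :=
  exists s : seq 'I_n, v \in s /\ self_winning_cycle E a p s.

Definition prio_distribution (R : realType) (q : nat -> R) : Prop :=
  (forall k, 0 <= q k) /\
  (\esum_(k in [set: nat]) (q k)%:E = 1%E) /\
  (\esum_(k in [set k : nat | ~~ odd k]) (q k)%:E = (1 / 2 : R)%:E).

(* Probability, under model (R) with out-degree d and priority law q, that
   node v of the random game on n nodes is self-winning: the (countable) sum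
   over all outcomes (E, a, p) of the event, each outcome having weight
   (1/#graphs) * 2^-n * prod_i q (p i). *)
Definition prob_self_winning (R : realType) (q : nat -> R) (d n : nat)
    (v : 'I_n) : \bar R :=
  \esum_(x in [set x : graph n * owners n * prios n |
            outdeg_eq d x.1.1 /\ self_winning x.1.1 x.1.2 x.2 v])
     ((\prod_(i : 'I_n) q (x.2 i)) /
        ((ngraphs d n)%:R * (2 ^+ n)))%:E.

From HB Require Import structures.
From mathcomp Require Import all_boot all_order all_algebra.
From mathcomp Require Import all_classical all_reals all_analysis.
From mathcomp Require Import finmap ring lra zify.
Import Order.TTheory GRing.Theory Num.Theory.
Import numFieldNormedType.Exports.
Set Implicit Arguments. Unset Strict Implicit.
Local Open Scope classical_set_scope.
Local Open Scope ring_scope.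

(* A self-winning node v lies on a cycle v :: t (t a repetition-free list of
   k further nodes) all of whose nodes have the same owner, and for every
   node x of the cycle its successor on the cycle is an out-neighbour of x.
   We forget the priorities and bound the probability of this event by a
   union bound over k and t:
   - for a fixed cycle of size k+1, at most (n-1)^(k+1) C(n,2)^(n-k-1) of the
     C(n,2)^n graphs contain its edges, and at most 2 * 2^(n-k-1) of the 2^n
     ownership maps are constant on it;
   - there are (n-1)^_k choices of t, and the priority weights sum to <= 1.
   Hence P(v self-winning) <= 2 * sum_(k<n) (n-1)^_k / n^(k+1).  Bounding
   (n-1)^_k by n^K (n-K)^(k-K) and summing a geometric series shows that the
   sum is at most K/n + 1/K for every 0 < K <= n, so the bound tends to 0.
   The file proves, in this order: counting lemmas on graphs and owners, the
   union bound on cycles, the resulting bound on the probability, and the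
   asymptotic estimate; the theorem is the combination of the last two. *)

Section Counting.
Local Open Scope nat_scope.
Local Open Scope set_scope.

Lemma card_family_prod (I T : finType) (F : I -> pred T) :
  #|(family F : simpl_pred {ffun I -> T})| = \prod_x #|F x|.
Proof. by rewrite card_family foldrE big_map big_enum. Qed.

Lemma card_pairs_containing (T : finType) (y : T) :
  #|[pred S : {set T} | (#|S| == 2) && (y \in S)]| <= #|T|.-1.
Proof.
rewrite -(cardsC1 y); apply: leq_trans (leq_imset_card (fun z => [set y; z]) [set~ y]).
apply: subset_leq_card; apply/fintype.subsetP => S.
rewrite inE => /andP[/cards2P[x [z [xz ->]]]].
rewrite !inE => /orP[]/eqP ->.
  by apply/imsetP; exists z => //; rewrite !inE eq_sym.
by apply/imsetP; exists x; [rewrite !inE | rewrite finset.setUC].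
Qed.

Lemma prod_mem_seq (T : finType) (s : seq T) (a b : nat) : uniq s ->
  \prod_(x : T) (if x \in s then a else b) = a ^ size s * b ^ (#|T| - size s).
Proof.
move=> us; rewrite (bigID (mem s)) /=.
rewrite (eq_bigr (fun=> a)); last by move=> x ->.
rewrite [X in _ * X](eq_bigr (fun=> b)); last by move=> x /negbTE ->.
rewrite !prod_nat_const -(card_uniqP us) -(cardC (mem s)) addKn.
by congr (_ ^ _ * _ ^ _); apply: eq_card => x; rewrite !inE.
Qed.

Lemma card_paths_from (T : finType) (v : T) (k : nat) :
  #|[set t : k.-tuple T | uniq (v :: t)]| = #|T|.-1 ^_ k.
Proof.
rewrite -(cardC1 v) -card_uniq_tuples; apply: eq_card => t.
by rewrite !inE /= all_predC has_pred1.
Qed.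

Lemma ngraphs2 (n : nat) : ngraphs 2 n = 'C(n, 2) ^ n.
Proof.
pose F := fun x : 'I_n => [pred S : {set 'I_n} | #|S| == 2].
rewrite /ngraphs (@eq_card _ _ (family F)); last first.
  move=> E; apply/idP/idP; rewrite in_setE /= /outdeg_eq => h.
    by apply/familyP => x; rewrite inE; move/forallP: h.
  by apply/forallP => x; move/familyP: h => /(_ x); rewrite inE.
rewrite card_family_prod (eq_bigr (fun=> 'C(n, 2))).
  by rewrite prod_nat_const card_ord.
move=> x _; rewrite -[n in 'C(n, 2)]card_ord -card_draws.
by apply: eq_card => S; rewrite !inE.
Qed.

Definition has_cycle_edges (n : nat) (s : seq 'I_n) (E : graph n) : bool :=
  all (fun x => next s x \in E x) s.

Definition monochrome (n : nat) (s : seq 'I_n) (a : owners n) : bool :=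
  [exists b, all (fun x => a x == b) s].

(* Containing the edges of a cycle s leaves at most n - 1 choices of
   out-neighbourhood at each node of s. *)
Lemma card_graphs_with_cycle (n : nat) (s : seq 'I_n) : uniq s ->
  #|[set E : graph n | outdeg_eq 2 E && has_cycle_edges s E]|
    <= n.-1 ^ size s * 'C(n, 2) ^ (n - size s).
Proof.
move=> us.
pose F := fun x : 'I_n =>
  [pred S : {set 'I_n} | (#|S| == 2) && ((x \in s) ==> (next s x \in S))].
apply: (@leq_trans #|(family F : simpl_pred {ffun 'I_n -> {set 'I_n}})|).
  apply: subset_leq_card; apply/fintype.subsetP => E.
  rewrite inE => /andP[/forallP hd /allP hg].
  by apply/familyP => x; rewrite !inE hd /=; apply/implyP => /hg.
rewrite card_family_prod.
apply: (@leq_trans (\prod_x (if x \in s then n.-1 else 'C(n, 2)))).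
  apply: leq_prod => x _; case: ifP => xs.
    have := card_pairs_containing (next s x); rewrite card_ord; apply: leq_trans.
    by apply: subset_leq_card; apply/fintype.subsetP => S; rewrite !inE xs.
  rewrite -[n in 'C(n, 2)]card_ord -card_draws.
  by apply: subset_leq_card; apply/fintype.subsetP => S; rewrite !inE xs andbT.
by rewrite prod_mem_seq // card_ord.
Qed.

(* Being constant on s leaves two choices of owner on s. *)
Lemma card_monochrome_owners (n : nat) (s : seq 'I_n) : uniq s ->
  #|[set a : owners n | monochrome s a]| <= 2 * 2 ^ (n - size s).
Proof.
move=> us.
have const_on (b : bool) :
    #|[set a : owners n | all (fun x => a x == b) s]| <= 2 ^ (n - size s).
  pose F := fun x : 'I_n => [pred c : bool | (x \in s) ==> (c == b)].
  apply: (@leq_trans #|(family F : simpl_pred {ffun 'I_n -> bool})|).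
    apply: subset_leq_card; apply/fintype.subsetP => a; rewrite inE => /allP ha.
    by apply/familyP => x; rewrite !inE; apply/implyP => /ha.
  rewrite card_family_prod.
  apply: (@leq_trans (\prod_x (if x \in s then 1 else 2))).
    apply: leq_prod => x _; case: ifP => xs; last by rewrite -card_bool max_card.
    by rewrite (@eq_card _ _ (pred1 b)) ?card1 // => c; rewrite !inE xs.
  by rewrite prod_mem_seq // card_ord exp1n mul1n.
apply: (@leq_trans #|[set a : owners n | all (fun x => a x == true) s] :|:
                    [set a : owners n | all (fun x => a x == false) s]|).
  apply: subset_leq_card; apply/fintype.subsetP => a.
  by rewrite !inE => /existsP[[] ->]; rewrite ?orbT.
by rewrite mul2n -addnn; apply: leq_trans (leq_card_setU _ _) (leq_add _ _).
Qed.

Definition on_monochrome_cycle (n : nat) (v : 'I_n)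
    (e : graph n * owners n) : bool :=
  [exists k : 'I_n, [exists t : k.-tuple 'I_n,
     [&& uniq (v :: t), has_cycle_edges (v :: t) e.1 & monochrome (v :: t) e.2]]].

(* A self-winning cycle through v, rotated to start at v, is such a cycle. *)
Lemma self_winning_on_monochrome_cycle (n : nat) (v : 'I_n) (E : graph n)
    (a : owners n) (p : prios n) :
  self_winning E a p v -> on_monochrome_cycle v (E, a).
Proof.
move=> [s [vs /and4P[_ us cyc /existsP[b /andP[mono _]]]]].
case: (rot_to vs) => i t rot_s.
have ut : uniq (v :: t) by rewrite -rot_s rot_uniq.
have size_t : size t < n.
  by have := max_card (mem (v :: t)); rewrite (card_uniqP ut) card_ord.
apply/existsP; exists (Ordinal size_t); apply/existsP; exists (in_tuple t).
apply/and3P; split => //.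
  apply/allP => x xt; apply: (next_cycle (e := fun x y => y \in E x)) xt.
  by rewrite -rot_s rot_cycle.
apply/existsP; exists b; apply/allP => x.
by rewrite -rot_s mem_rot => /(allP mono).
Qed.

Lemma card_exists_le (T I : finType) (P : I -> T -> bool) :
  #|[set x | [exists i, P i x]]| <= \sum_i #|[set x | P i x]|.
Proof.
rewrite -sum1_card (eq_bigr (fun i => \sum_x (if P i x then 1 else 0))); last first.
  by move=> i _; rewrite -sum1_card big_mkcond; apply: eq_bigr => x _; rewrite inE.
rewrite exchange_big /= big_mkcond /=; apply: leq_sum => x _; rewrite inE.
case: existsP => [[i Pi]|//]; rewrite (bigD1 i) //= Pi; exact: leq_addr.
Qed.

Lemma card_on_monochrome_cycle (n : nat) (v : 'I_n) :
  #|[set e : graph n * owners n | outdeg_eq 2 e.1 && on_monochrome_cycle v e]|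
    <= \sum_(k < n) n.-1 ^_ k *
         (n.-1 ^ k.+1 * 'C(n, 2) ^ (n - k.+1) * (2 * 2 ^ (n - k.+1))).
Proof.
pose Q (k : 'I_n) (e : graph n * owners n) := [exists t : k.-tuple 'I_n,
  outdeg_eq 2 e.1 &&
  [&& uniq (v :: t), has_cycle_edges (v :: t) e.1 & monochrome (v :: t) e.2]].
apply: (@leq_trans #|[set e | [exists k, Q k e]]|).
  apply: subset_leq_card; apply/fintype.subsetP => e.
  rewrite !inE => /andP[hd /existsP[k /existsP[t ht]]].
  by apply/existsP; exists k; apply/existsP; exists t; rewrite hd.
apply: leq_trans (card_exists_le _) _; apply: leq_sum => k _.
apply: leq_trans (card_exists_le _) _.
have := card_paths_from v k; rewrite card_ord => <-.
rewrite -sum_nat_const [X in _ <= X]big_mkcond; apply: leq_sum => t _; rewrite inE.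
case: ifP => ut; last first.
  by rewrite leqn0 cards_eq0; apply/eqP/setP => e; rewrite !inE /= andbF.
have size_vt : size (v :: t) = k.+1 by rewrite /= size_tuple.
apply: (@leq_trans #|finset.setX
    [set E : graph n | outdeg_eq 2 E && has_cycle_edges (v :: t) E]
    [set a : owners n | monochrome (v :: t) a]|).
  apply: subset_leq_card; apply/fintype.subsetP => -[E a].
  by rewrite !inE /= => /andP[-> /andP[-> ->]].
rewrite cardsX; apply: leq_mul.
  by have := card_graphs_with_cycle ut; rewrite size_vt.
by have := card_monochrome_owners ut; rewrite size_vt.
Qed.

Lemma cycle_term_identity (n k : nat) : k < n ->
  n.-1 ^ k.+1 * 'C(n, 2) ^ (n - k.+1) * (2 * 2 ^ (n - k.+1)) * n ^ k.+1 =
  2 * ('C(n, 2) ^ n * 2 ^ n).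
Proof.
move=> kn.
have pairs : n.-1 * n = 2 * 'C(n, 2).
  by rewrite mulnC -[in LHS](bin1 n.-1) mul_bin_diag.
have split_n : n = (n - k.+1) + k.+1 by rewrite subnK.
have on_cycle : n.-1 ^ k.+1 * n ^ k.+1 = 2 ^ k.+1 * 'C(n, 2) ^ k.+1.
  by rewrite -expnMn pairs expnMn.
(* Name r and C so that splitting n only touches the outer exponents. *)
set r := n - k.+1; set C := 'C(n, 2).
rewrite [in RHS]split_n !expnD.
rewrite (_ : forall a b c d, a * c * d * b = (a * b) * (c * d)); last first.
  by move=> a b c d; ring.
by rewrite on_cycle; ring.
Qed.

End Counting.

Section Probability.
Variable R : realType.
Variable q : nat -> R.
Hypothesis hq : prio_distribution q.

Lemma prio_partial_sum_le1 (M : nat) : \sum_(k < M) q k <= 1.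
Proof.
case: hq => q0 [qT _].
have := @nneseries_lim_ge R (fun k => (q k)%:E) xpredT 0 M
  (fun k _ _ => q0 k : (0 <= (q k)%:E)%E).
rewrite nneseries_esumT; last by move=> k; rewrite lee_fin.
by rewrite qT sumEFin lee_fin big_mkord.
Qed.

Lemma sum_uniq_le (T : finType) (s : seq T) (F : T -> R) : uniq s ->
  (forall x, 0 <= F x) -> \sum_(x <- s) F x <= \sum_x F x.
Proof.
move=> us F0; rewrite big_uniq // [X in _ <= X](bigID (mem s)) /=.
by rewrite lerDl sumr_ge0.
Qed.

(* Any finitely many priority assignments have total weight at most 1:
   they take values below some m, and the total weight of all assignments
   'I_n -> 'I_m.+1 is a product of partial sums of q. *)
Lemma prio_weight_sum_le1 (n : nat) (S : seq (prios n)) :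
  uniq S -> \sum_(p <- S) \prod_i q (p i) <= 1.
Proof.
move=> uS; have q0 := hq.1.
set m := \max_(p <- S) \max_i p i.
have lt_m p : p \in S -> forall i, (p i < m.+1)%N.
  move=> pS i; rewrite ltnS; apply: leq_trans (leq_bigmax i) _.
  exact: (@leq_bigmax_seq _ S xpredT (fun p : prios n => \max_i p i) p).
pose trunc (p : prios n) : {ffun 'I_n -> 'I_m.+1} := [ffun i => inord (p i)].
pose untrunc (f : {ffun 'I_n -> 'I_m.+1}) : prios n := [ffun i => val (f i)].
have truncK : {in S, cancel trunc untrunc}.
  by move=> p pS; apply/ffunP => i; rewrite !ffunE /= inordK // lt_m.
rewrite (eq_big_seq (fun p => \prod_i q (untrunc (trunc p) i))); last first.
  by move=> p pS; rewrite truncK.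
rewrite -(big_map trunc xpredT (fun f => \prod_i q (untrunc f i))).
apply: le_trans (sum_uniq_le _ _) _.
- by rewrite (map_inj_in_uniq (can_in_inj truncK)).
- by move=> f; apply: prodr_ge0 => i _.
under eq_bigr do under eq_bigr do rewrite ffunE.
rewrite -(bigA_distr_bigA (fun (i : 'I_n) (j : 'I_m.+1) => q j)) /=.
by apply: prodr_ile1 => i _; rewrite sumr_ge0 //= prio_partial_sum_le1.
Qed.

Local Open Scope ereal_scope.

Lemma esum_subset_le (T : choiceType) (S1 S2 : set T) (f : T -> \bar R) :
  S1 `<=` S2 -> \esum_(x in S1) f x <= \esum_(x in S2) f x.
Proof.
move=> S12; apply: ge_ereal_sup => _ [X [finX XS1] <-].
by apply: ereal_sup_ubound; exists X => //; split => // x /XS1 /S12.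
Qed.

Lemma esum_prio_weight_le (n : nat) (c : R) : (0 <= c)%R ->
  \esum_(p in [set: prios n]) ((\prod_i q (p i)) * c)%:E <= c%:E.
Proof.
move=> c0; apply: ge_ereal_sup => _ [X [finX _] <-].
rewrite fsbig_finite //= sumEFin lee_fin -mulr_suml.
by apply: ler_piMl => //; apply: prio_weight_sum_le1; exact: fset_uniq.
Qed.

Lemma esum_const_le_card (T : finType) (P : pred T) (c : R) : (0 <= c)%R ->
  \esum_(x in [set x | P x]) c%:E <= (#|[set x | P x]%SET|%:R * c)%:E.
Proof.
move=> c0; apply: ge_ereal_sup => _ [X [finX XP] <-].
rewrite fsbig_finite //= sumEFin lee_fin big_const_seq count_predT iter_addr_0.
rewrite -[X in (X <= _)%R]mulr_natl; apply: ler_wpM2r => //; rewrite ler_nat cardE.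
apply: uniq_leq_size; first exact: fset_uniq.
move=> x; rewrite in_fset_set // in_setE => /XP Px.
by rewrite mem_enum finset.in_set.
Qed.

Lemma prob_self_winning_le_count (n : nat) (v : 'I_n) :
  prob_self_winning q 2 v <=
  ((#|[set e | outdeg_eq 2 e.1 && on_monochrome_cycle v e]%SET|%:R /
     ((ngraphs 2 n)%:R * 2 ^+ n))%R)%:E.
Proof.
set D := ((ngraphs 2 n)%:R * 2 ^+ n)%R.
have D0 : (0 <= D^-1)%R by rewrite invr_ge0 mulr_ge0 // exprn_ge0.
have q0 := hq.1.
set P := fun e : graph n * owners n => outdeg_eq 2 e.1 && on_monochrome_cycle v e.
rewrite /prob_self_winning -/D.
apply: le_trans (_ : \esum_(x in [set e | P e] `*`` (fun=> [set: prios n]))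
    (((\prod_i q (x.2 i)) / D)%R)%:E <= _).
  apply: esum_subset_le => -[[E a] p] /= [hd sw]; split => //; rewrite /P /= hd /=.
  exact: self_winning_on_monochrome_cycle sw.
rewrite -(@esum_esum _ _ _ _ _ (fun (e : graph n * owners n) (p : prios n) =>
   (((\prod_i q (p i)) / D)%R)%:E)); last first.
  by move=> e p _ _; rewrite lee_fin mulr_ge0 // prodr_ge0.
apply: le_trans (_ : \esum_(e in [set e | P e]) (D^-1)%:E <= _).
  by apply: le_esum => e _; apply: esum_prio_weight_le.
by apply: le_trans (esum_const_le_card P D0) _; rewrite lee_fin mulrC.
Qed.

End Probability.

Section Asymptotics.
Variable R : realType.

Definition cycle_bound (n : nat) : R :=
  2 * \sum_(k < n) (n.-1 ^_ k)%:R / n%:R ^+ k.+1.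

Lemma cycle_bound_ge0 (n : nat) : 0 <= cycle_bound n.
Proof.
by rewrite mulr_ge0 // sumr_ge0 // => k _; rewrite divr_ge0 ?exprn_ge0.
Qed.

Lemma count_ratio_le_cycle_bound (n : nat) (v : 'I_n) : (1 < n)%N ->
  #|[set e | outdeg_eq 2 e.1 && on_monochrome_cycle v e]%SET|%:R /
     ((ngraphs 2 n)%:R * 2 ^+ n) <= cycle_bound n.
Proof.
move=> n1; rewrite ngraphs2 natrX.
have n0 : (0 < n%:R :> R) by rewrite ltr0n; apply: ltnW.
have D0 : (0 < 'C(n, 2)%:R ^+ n * 2 ^+ n :> R).
  by rewrite mulr_gt0 // exprn_gt0 // ltr0n bin_gt0.
rewrite ler_pdivrMr // /cycle_bound -mulrA mulr_suml mulr_sumr.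
apply: le_trans (_ : (\sum_(k < n) n.-1 ^_ k * (n.-1 ^ k.+1 * 'C(n, 2) ^ (n - k.+1)
                                    * (2 * 2 ^ (n - k.+1))))%N%:R <= _).
  by rewrite ler_nat card_on_monochrome_cycle.
rewrite natr_sum; apply: ler_sum => k _.
have := cycle_term_identity (ltn_ord k).
set B := (n.-1 ^ k.+1 * _ * _)%N => B_id.
have nk0 : n%:R ^+ k.+1 != 0 :> R by rewrite expf_neq0 // gt_eqF.
have B_idR : B%:R = 2 * ('C(n, 2)%:R ^+ n * 2 ^+ n) / n%:R ^+ k.+1 :> R.
  by apply: (mulIf nk0); rewrite mulfVK // -!natrX -!natrM B_id.
by rewrite natrM B_idR le_eqVlt; apply/orP; left; apply/eqP; ring.
Qed.

Lemma ffact_le_split (m K k : nat) : (K <= m)%N ->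
  (m.-1 ^_ k <= m ^ minn k K * (m - K) ^ (k - K))%N.
Proof.
move=> Km; elim: k => [|k IH]; first by rewrite ffactn0 min0n sub0n.
rewrite ffactnSr; case: (ltnP k K) => kK.
  rewrite (minn_idPl kK) (_ : k.+1 - K = 0)%N; last by apply/eqP; rewrite subn_eq0.
  rewrite (minn_idPl (ltnW kK)) (_ : k - K = 0)%N in IH; last first.
    by apply/eqP; rewrite subn_eq0 ltnW.
  by rewrite expnSr !expn0 !muln1 in IH *; apply: leq_mul => //; lia.
rewrite (minn_idPr (ltnW (kK : K < k.+1)%N)) (minn_idPr kK) in IH *.
by rewrite subSn // expnSr mulnA; apply: leq_mul => //; lia.
Qed.

Lemma geometric_sum_le (r : R) (N : nat) : 0 <= r < 1 ->
  \sum_(j < N) r ^+ j <= (1 - r)^-1.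
Proof.
case/andP => r0 r1; have r1' : 0 < 1 - r by rewrite subr_gt0.
rewrite -(ler_pM2l r1') mulfV ?gt_eqF //.
have := subrXX 1 r N; rewrite expr1n.
under eq_bigr do rewrite expr1n mul1r.
by move=> <-; rewrite lerBlDr lerDl exprn_ge0.
Qed.

Lemma ffact_ratio_le (m K k : nat) : (K <= m)%N -> (0 < m)%N ->
  (m.-1 ^_ k)%:R / m%:R ^+ k.+1 <= m%:R^-1 * ((m - K)%:R / m%:R) ^+ (k - K) :> R.
Proof.
move=> Km m0; have m0' : (0 < m%:R :> R) by rewrite ltr0n.
have split_k : k = (minn k K + (k - K))%N by lia.
rewrite ler_pdivrMr ?exprn_gt0 //.
apply: le_trans (_ : ((m ^ minn k K * (m - K) ^ (k - K))%N%:R <= _)).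
  by rewrite ler_nat ffact_le_split.
rewrite natrM !natrX expr_div_n.
rewrite [in X in _ <= _ * X]split_k exprSr exprD le_eqVlt; apply/orP; left.
by apply/eqP; field; rewrite expf_neq0 // gt_eqF.
Qed.

Lemma sum_ffact_ratio_le (m K : nat) : (0 < K)%N -> (K <= m)%N ->
  \sum_(k < m) (m.-1 ^_ k)%:R / m%:R ^+ k.+1 <= K%:R / m%:R + K%:R^-1 :> R.
Proof.
move=> K0 Km.
have m0 : (0 < m)%N by apply: leq_trans Km.
have m0' : (0 < m%:R :> R) by rewrite ltr0n.
have K0' : (0 < K%:R :> R) by rewrite ltr0n.
set r : R := (m - K)%:R / m%:R.
have one_r : 1 - r = K%:R / m%:R by rewrite /r natrB //; field; rewrite gt_eqF.
have r01 : 0 <= r < 1 by rewrite divr_ge0 //= -subr_gt0 one_r divr_gt0.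
apply: le_trans (_ : \sum_(k < m) m%:R^-1 * r ^+ (k - K) <= _).
  by apply: ler_sum => k _; apply: ffact_ratio_le.
rewrite -(big_mkord xpredT (fun k => m%:R^-1 * r ^+ (k - K))).
rewrite (@big_cat_nat _ _ _ K) //=; apply: lerD.
  rewrite big_nat_cond (eq_bigr (fun=> m%:R^-1)); last first.
    move=> i /andP[/andP[_ iK] _]; rewrite (_ : i - K = 0)%N ?expr0 ?mulr1 //.
    by apply/eqP; rewrite subn_eq0 ltnW.
  by rewrite -big_nat_cond sumr_const_nat subn0 mulrC mulr_natr.
rewrite (_ : K = 0 + K)%N // big_addn big_mkord !add0n.
under eq_bigr do rewrite addnK.
rewrite -mulr_sumr; apply: le_trans (ler_wpM2l _ (geometric_sum_le _ r01)) _.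
  by rewrite invr_ge0 ltW.
by rewrite one_r invf_div mulrA mulVf ?mul1r ?gt_eqF.
Qed.

(* The bound tends to 0: choose K ~ 4/eps, then n ~ 4K/eps. *)
Lemma cycle_bound_cvg0 : (fun n : nat => cycle_bound n.+1) @ \oo --> (0 : R).
Proof.
apply/cvgrPdist_le => eps eps0.
set K := (Num.truncn (4 / eps)).+1.
have K_gt : 4 / eps < K%:R by apply: truncnS_gt.
have K0 : (0 < K%:R :> R) by rewrite ltr0n.
set N := maxn K (Num.truncn (4 * K%:R / eps)).+1.
apply: filterS (nbhs_infty_ge N) => n Nn.
have Kn : (K <= n.+1)%N by apply: leq_trans (leq_maxl _ _) (leq_trans Nn _).
have n_gt : 4 * K%:R / eps < n.+1%:R.
  apply: lt_le_trans (truncnS_gt _) _; rewrite ler_nat.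
  by apply: leq_trans (leq_maxr _ _) (leq_trans Nn _).
have n0 : (0 < n.+1%:R :> R) by rewrite ltr0n.
rewrite sub0r normrN ger0_norm ?cycle_bound_ge0 //.
apply: le_trans (_ : 2 * (K%:R / n.+1%:R + K%:R^-1) <= _).
  by rewrite ler_pM2l // sum_ffact_ratio_le.
have small1 : K%:R / n.+1%:R <= eps / 4.
  by rewrite ltr_pdivrMr // in n_gt; rewrite ler_pdivrMr //; lra.
have small2 : K%:R^-1 <= eps / 4.
  by rewrite ltr_pdivrMr // in K_gt; rewrite -[K%:R^-1]mul1r ler_pdivrMr //; lra.
apply: le_trans (_ : 2 * (eps / 4 + eps / 4) <= _); first by rewrite ler_pM2l // lerD.
by rewrite le_eqVlt; apply/orP; left; apply/eqP; field.
Qed.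

End Asymptotics.

Theorem mainTheorem5 (R : realType) (q : nat -> R)
    (hq : prio_distribution q) (v : forall n : nat, 'I_n.+1) :
  (fun n : nat => prob_self_winning q 2 (v n)) @ \oo --> (0 : \bar R)%E.
Proof.
apply: (@squeeze_cvge _ _ _ R (fun=> 0%E) _ (fun n => (cycle_bound R n.+1)%:E)).
- apply: filterS (nbhs_infty_ge 1) => n n1; apply/andP; split.
    apply: esum_ge0 => x _.
    by rewrite lee_fin divr_ge0 ?mulr_ge0 ?prodr_ge0 ?exprn_ge0 // => i _; apply: hq.1.
  apply: le_trans (prob_self_winning_le_count hq (v n)) _.
  by rewrite lee_fin count_ratio_le_cycle_bound.
- exact: cvg_cst.
- by apply: cvg_EFin; [exact: nearW | exact: cycle_bound_cvg0].
Qed.
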